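(* Let $F$ be the elementary cellular automaton with rule number 27. For every nonempty finite word $u\in\{0,1\}^*$, the deterministic communication complexity of $\textsc{SInv}_{F,u}$ restricted to inputs of length $n$ is bounded by a constant independent of $n$.
   Context: An elementary cellular automaton (ECA) with rule number $N\in\{0,\dots,255\}$ is the map $F:\{0,1\}^{\mathbb Z}\to\{0,1\}^{\mathbb Z}$ given by $F(x)_i=f(x_{i-1},x_i,x_{i+1})$. Here the local rule $f:\{0,1\}^3\to\{0,1\}$ is determined by $N=\sum_{a,b,c\in\{0,1\}}2^{4a+2b+c}f(a,b,c)$. For a nonempty finite word $u$, $p_u\in\{0,1\}^{\mathbb Z}$ is defined by $(p_u)_i=u_{i\bmod |u|}$. For a finite word $x$, $p_u[x]$ is the configuration equal to $x$ on positions $0,\dots,|x|-1$ and to $p_u$ elsewhere. $\textsc{SInv}_{F,u}$ is the decision problem: on input a finite word $x$, decide whether there is an integer $w$ such that for all $t\ge0$ the set of positions where $F^t(p_u)$ and $F^t(p_u[x])$ differ is contained in an interval of length $w$. For each $n$, it is regarded as a function $\{0,1\}^n\to\{0,1\}$. For a function $g:X\times Y\to Z$, $D(g)$ is the minimal depth of a deterministic two-party protocol computing $g$. In such a protocol, Alice knows $x$ and Bob knows $y$. The protocol is a binary tree: each internal node is labelled by a function of Alice's input only or of Bob's input only, with values in $\{\text{left},\text{right}\}$, and each leaf is labelled by an output value. For $g:\{0,1\}^m\to Z$, set $D(g)=\max_{0\le i<m}D(g_i)$, where $g_i:\{0,1\}^i\times\{0,1\}^{m-i}\to Z$ is $g_i(x,y)=g(xy)$.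 *)

From Stdlib Require Import ZArith List Arith Bool.
Import ListNotations.
Open Scope Z_scope.

Definition config := Z -> bool.

Definition local_rule (N : nat) (a b c : bool) : bool :=
  Nat.testbit N (4 * Nat.b2n a + 2 * Nat.b2n b + Nat.b2n c)%nat.

Definition eca (N : nat) (x : config) : config :=
  fun i => local_rule N (x (i - 1)) (x i) (x (i + 1)).

Definition periodic (u : list bool) : config :=
  fun i => nth (Z.to_nat (i mod Z.of_nat (length u))) u false.

Definition patch (u x : list bool) : config :=
  fun i => if (0 <=? i) && (i <? Z.of_nat (length x))
           then nth (Z.to_nat i) x false
           else periodic u i.

Definition SInv (N : nat) (u x : list bool) : Prop :=
  exists w : nat, forall t : nat, exists a : Z, forall i : Z,
    Nat.iter t (eca N) (periodic u) i <> Nat.iter t (eca N) (patch u x) i ->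
    a <= i < a + Z.of_nat w.

(** Deterministic two-party protocols (binary trees); node functions return
    false = left, true = right; leaves are labelled by the output in {0,1}. *)
Inductive protocol (X Y : Type) : Type :=
| Leaf : bool -> protocol X Y
| AliceNode : (X -> bool) -> protocol X Y -> protocol X Y -> protocol X Y
| BobNode : (Y -> bool) -> protocol X Y -> protocol X Y -> protocol X Y.

Arguments Leaf {X Y}.
Arguments AliceNode {X Y}.
Arguments BobNode {X Y}.

Fixpoint eval {X Y : Type} (P : protocol X Y) (x : X) (y : Y) : bool :=
  match P with
  | Leaf b => b
  | AliceNode f l r => if f x then eval r x y else eval l x y
  | BobNode g l r => if g y then eval r x y else eval l x y
  end.

Fixpoint depth {X Y : Type} (P : protocol X Y) : nat :=
  match P with
  | Leaf _ => 0
  | AliceNode _ l r => S (Nat.max (depth l) (depth r))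
  | BobNode _ l r => S (Nat.max (depth l) (depth r))
  end.

(** D(g restricted to {0,1}^n) <= k, where g is a decision problem on words:
    for every split point 0 <= i < n there is a protocol of depth <= k, Alice
    holding x in {0,1}^i and Bob holding y in {0,1}^(n-i), computing g(xy). *)
Definition comm_complexity_le (g : list bool -> Prop) (n k : nat) : Prop :=
  forall i : nat, (i < n)%nat ->
    exists P : protocol (list bool) (list bool),
      (depth P <= k)%nat /\
      forall x y : list bool, length x = i -> length y = (n - i)%nat ->
        (eval P x y = true <-> g (x ++ y)).

(* Rule 27 becomes, after one step, a conveyor dynamics.  Writing [y = F c], the
   configuration [F^(2s+1) c] is [y] shifted by [s] and slid [s] times, where a slide copies
   [y (i + 3)] into every active cell [i] (one with [y (i-1) = 0], [y (i+1) = 1],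
   [y (i+2) = 0]); slides do not change which cells are active.  Hence [slides s y i] is
   [y (i + 3 j)], with [j] the length of the run of active cells [i, i + 3, ...] cut at [s].

   For [B = F p_u] periodic and [Y = F p_u[x]], equal to [B] off a finite window,
   differences can only travel to the left along residue classes mod 3 on which [B] is
   entirely active.  So [SInv] amounts to a condition on each such class: [B] is constant on
   it, equal to [Y] at the first inactive cell of the class, and either [Y] agrees with [B]
   along the initial active stretch of the class or every run of [Y] ends on the [B]-value of
   its start.  Relative to a cut point this condition depends only on the configuration to
   the right and on 16 bits describing the left, which Alice sends together with her last
   six letters; Bob answers with one more bit. *)

From Stdlib Require Import ZArith List Arith Bool Lia Classical ClassicalDescription.
Import ListNotations.
Open Scope Z_scope.

Notation rule27 := (eca 27).

Definition active (y : config) (i : Z) : bool :=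
  negb (y (i - 1)) && y (i + 1) && negb (y (i + 2)).

Definition slide (y : config) : config :=
  fun i => if active y i then y (i + 3) else y i.

Definition slides (s : nat) (y : config) : config := Nat.iter s slide y.

Lemma rule27_cube c i : rule27 (rule27 (rule27 c)) i = slide (rule27 c) (i - 1).
Proof.
  unfold eca, slide, active, local_rule.
  repeat match goal with |- context [c ?e] => progress (ring_simplify e) end.
  destruct (c (i-3)), (c (i-2)), (c (i-1)), (c i), (c (i+1)), (c (i+2)), (c (i+3)); reflexivity.
Qed.

Lemma active_slide y i : active (slide y) i = active y i.
Proof.
  unfold slide, active.
  repeat match goal with |- context [y ?e] => progress (ring_simplify e) end.
  destruct (y (i-2)), (y (i-1)), (y i), (y (i+1)), (y (i+2)), (y (i+3)), (y (i+4)), (y (i+5));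
    reflexivity.
Qed.

Lemma active_slides s y i : active (slides s y) i = active y i.
Proof.
  induction s as [|s IH]; [reflexivity|].
  change (active (slide (slides s y)) i = active y i). now rewrite active_slide, IH.
Qed.

Lemma slides_succ s y i :
  slides (S s) y i = if active y i then slides s y (i + 3) else y i.
Proof.
  revert i; induction s as [|s IH]; intro i; [reflexivity|].
  change (slides (S (S s)) y i) with (slide (slides (S s) y) i).
  unfold slide at 1. rewrite active_slides.
  destruct (active y i) eqn:E; [reflexivity|].
  now rewrite IH, E.
Qed.

Lemma slides_inactive s y i : active y i = false -> slides s y i = y i.
Proof. intro E. destruct s; [reflexivity|]. now rewrite slides_succ, E. Qed.

Lemma slides_active s y i : active y i = true -> slides (S s) y i = slides s y (i + 3).
Proof. intro E. now rewrite slides_succ, E. Qed.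

Lemma slide_shift y z d :
  (forall j, y j = z (j + d)) -> forall i, slide y i = slide z (i + d).
Proof.
  intros Hyz i. unfold slide, active. rewrite !Hyz.
  repeat match goal with |- context [z ?e] => progress (ring_simplify e) end.
  reflexivity.
Qed.

Lemma iter_rule27_odd s c i :
  Nat.iter (2 * s + 1) rule27 c i = slides s (rule27 c) (i - Z.of_nat s).
Proof.
  revert i; induction s as [|s IH]; intro i.
  - simpl. f_equal. lia.
  - replace (2 * S s + 1)%nat with (S (S (S (2 * s)))) by lia.
    replace (2 * s + 1)%nat with (S (2 * s)) in IH by lia.
    change (rule27 (rule27 (rule27 (Nat.iter (2 * s) rule27 c))) i
            = slide (slides s (rule27 c)) (i - Z.of_nat (S s))).
    rewrite rule27_cube, (slide_shift _ _ (- Z.of_nat s) IH). f_equal. lia.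
Qed.

Definition bounded_diff (f g : nat -> config) : Prop :=
  exists w : nat, forall t : nat, exists a : Z, forall i,
    f t i <> g t i -> a <= i < a + Z.of_nat w.

Lemma eca_agree N c d i :
  c (i - 1) = d (i - 1) -> c i = d i -> c (i + 1) = d (i + 1) -> eca N c i = eca N d i.
Proof. intros E1 E2 E3. unfold eca. now rewrite E1, E2, E3. Qed.

Lemma eca_diff_window N c d a w :
  (forall i, c i <> d i -> a <= i < a + w) ->
  forall i, eca N c i <> eca N d i -> a - 1 <= i < a + w + 1.
Proof.
  intros Hcd i Hi.
  assert (Hout : forall j, ~ (a <= j < a + w) -> c j = d j).
  { intros j Hj. destruct (bool_dec (c j) (d j)) as [E|E]; [exact E|].
    now apply Hcd in E. }
  destruct (Z_le_gt_dec (a - 1) i), (Z_lt_ge_dec i (a + w + 1)); try lia;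
    exfalso; apply Hi, eca_agree; apply Hout; lia.
Qed.

Lemma patch_diff_window u z i :
  periodic u i <> patch u z i -> 0 <= i < Z.of_nat (length z).
Proof.
  unfold patch. destruct ((0 <=? i) && (i <? Z.of_nat (length z))) eqn:E.
  - rewrite andb_true_iff, Z.leb_le, Z.ltb_lt in E. now intros _.
  - now intros [].
Qed.

Lemma SInv27_iff u z :
  SInv 27 u z <->
  bounded_diff (fun s => slides s (rule27 (periodic u))) (fun s => slides s (rule27 (patch u z))).
Proof.
  split.
  - intros [w Hw]. exists w. intro s. destruct (Hw (2 * s + 1)%nat) as [a Ha].
    exists (a - Z.of_nat s). intros i Hi.
    specialize (Ha (i + Z.of_nat s)). rewrite !iter_rule27_odd in Ha.
    replace (i + Z.of_nat s - Z.of_nat s) with i in Ha by lia.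
    specialize (Ha Hi). lia.
  - intros [w Hw]. exists (length z + w + 2)%nat. intro t.
    destruct (Nat.Even_or_Odd t) as [[[|s] Ht]|[s Ht]]; subst t.
    + exists 0. intros i Hi. apply patch_diff_window in Hi. lia.
    + destruct (Hw s) as [a Ha]. exists (a + Z.of_nat s - 1). intros i Hi.
      replace (2 * S s)%nat with (S (2 * s + 1)) in Hi by lia.
      assert (Hwin := eca_diff_window 27 (Nat.iter (2 * s + 1) rule27 (periodic u))
                (Nat.iter (2 * s + 1) rule27 (patch u z)) (a + Z.of_nat s) (Z.of_nat w)).
      enough (a + Z.of_nat s - 1 <= i < a + Z.of_nat s + Z.of_nat w + 1) by lia.
      apply Hwin; [|exact Hi].
      intros j Hj. rewrite !iter_rule27_odd in Hj. apply Ha in Hj. lia.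
    + destruct (Hw s) as [a Ha]. exists (a + Z.of_nat s). intros i Hi.
      rewrite !iter_rule27_odd in Hi. apply Ha in Hi. lia.
Qed.

Definition active_run (y : config) (i : Z) (j : nat) : Prop :=
  forall j', (j' < j)%nat -> active y (i + 3 * Z.of_nat j') = true.

Lemma active_run_0 y i : active_run y i 0.
Proof. intros j' Hj'. lia. Qed.

Lemma active_run_succ y i j :
  active_run y i (S j) <-> active y i = true /\ active_run y (i + 3) j.
Proof.
  split.
  - intro Hrun. split.
    + specialize (Hrun 0%nat). rewrite Z.add_0_r in Hrun. apply Hrun. lia.
    + intros j' Hj'. replace (i + 3 + 3 * Z.of_nat j') with (i + 3 * Z.of_nat (S j')) by lia.
      apply Hrun. lia.
  - intros [H0 Hrun] [|j'] Hj'.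
    + now rewrite Z.add_0_r.
    + replace (i + 3 * Z.of_nat (S j')) with (i + 3 + 3 * Z.of_nat j') by lia.
      apply Hrun. lia.
Qed.

Lemma slides_run k s y i :
  active_run y i k -> slides (s + k) y i = slides s y (i + 3 * Z.of_nat k).
Proof.
  revert i; induction k as [|k IH]; intros i Hrun.
  - rewrite Nat.add_0_r, Z.add_0_r. reflexivity.
  - apply active_run_succ in Hrun as [H0 Hrun].
    replace (s + S k)%nat with (S (s + k)) by lia.
    rewrite slides_active, IH by assumption. f_equal. lia.
Qed.

Lemma slides_cases s y i :
  (active_run y i s /\ slides s y i = y (i + 3 * Z.of_nat s)) \/
  (exists j, (j < s)%nat /\ active_run y i j /\ active y (i + 3 * Z.of_nat j) = false /\
             slides s y i = y (i + 3 * Z.of_nat j)).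
Proof.
  revert i; induction s as [|s IH]; intro i.
  - left. split; [apply active_run_0|]. now rewrite Z.add_0_r.
  - destruct (active y i) eqn:E.
    + rewrite slides_active by exact E.
      destruct (IH (i + 3)) as [[Hrun Hval]|[j [Hj [Hrun [Hstop Hval]]]]].
      * left. split; [now apply active_run_succ|]. rewrite Hval. f_equal. lia.
      * right. exists (S j). split; [lia|]. split; [now apply active_run_succ|].
        replace (i + 3 * Z.of_nat (S j)) with (i + 3 + 3 * Z.of_nat j) by lia. now split.
    + right. exists 0%nat. rewrite Z.add_0_r.
      split; [lia|]. split; [apply active_run_0|]. split; [exact E|].
      now apply slides_inactive.
Qed.

Lemma slides_agree Y B s i :
  (forall j, (j <= s)%nat -> active_run Y i j ->
     active Y (i + 3 * Z.of_nat j) = active B (i + 3 * Z.of_nat j) /\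
     Y (i + 3 * Z.of_nat j) = B (i + 3 * Z.of_nat j)) ->
  slides s Y i = slides s B i.
Proof.
  revert i; induction s as [|s IH]; intros i Hagree;
    destruct (Hagree 0%nat ltac:(lia) (active_run_0 Y i)) as [Ea Ev];
    rewrite Z.add_0_r in Ea, Ev; [exact Ev|].
  destruct (active Y i) eqn:E.
  - rewrite !slides_active by congruence. apply IH.
    intros j Hj Hrun. replace (i + 3 + 3 * Z.of_nat j) with (i + 3 * Z.of_nat (S j)) by lia.
    apply Hagree; [lia|]. now apply active_run_succ.
  - rewrite !slides_inactive by congruence. exact Ev.
Qed.

Inductive stops_at (y : config) : Z -> Z -> Prop :=
| stop_here i : active y i = false -> stops_at y i i
| stop_later i e : active y i = true -> stops_at y (i + 3) e -> stops_at y i e.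

Lemma stops_at_iff y i e :
  stops_at y i e <->
  exists j, e = i + 3 * Z.of_nat j /\ active_run y i j /\ active y e = false.
Proof.
  split.
  - induction 1 as [i Hi|i e Hi _ [j [Ej [Hrun Hstop]]]].
    + exists 0%nat. rewrite Z.add_0_r. split; [reflexivity|]. split; [apply active_run_0|exact Hi].
    + exists (S j). split; [lia|]. split; [now apply active_run_succ|exact Hstop].
  - intros [j [Ej [Hrun Hstop]]]. subst e. revert i Hrun Hstop.
    induction j as [|j IH]; intros i Hrun Hstop.
    + rewrite Z.add_0_r in *. now constructor.
    + apply active_run_succ in Hrun as [H0 Hrun]. apply stop_later; [exact H0|].
      replace (i + 3 * Z.of_nat (S j)) with (i + 3 + 3 * Z.of_nat j) in Hstop |- * by lia.
      now apply IH.
Qed.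

Ltac zlia := Z.div_mod_to_equations; lia.

Definition cong3 (r k : Z) : Prop := (k - r) mod 3 = 0.

Lemma cong3_add r i j : cong3 r i -> cong3 r (i + 3 * j).
Proof. unfold cong3. intros. zlia. Qed.

Lemma cong3_sub r i j : cong3 r i -> cong3 r (i - 3 * j).
Proof. unfold cong3. intros. zlia. Qed.

Lemma cong3_le r i k : cong3 r i -> cong3 r k -> i <= k -> exists j : nat, k = i + 3 * Z.of_nat j.
Proof.
  unfold cong3. intros Hi Hk Hle. exists (Z.to_nat ((k - i) / 3)).
  rewrite Z2Nat.id by (apply Z.div_pos; lia). zlia.
Qed.

Definition class_active (B : config) (r : Z) : Prop := forall t, active B (r + 3 * t) = true.

Definition class_active_below (Y : config) (r Q : Z) : Prop :=
  forall k, cong3 r k -> k < Q -> active Y k = true.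

Definition first_stop (Y : config) (r e : Z) : Prop :=
  cong3 r e /\ active Y e = false /\ class_active_below Y r e.

Lemma first_stop_exists Y r K e :
  cong3 r e -> active Y e = false -> class_active_below Y r K ->
  exists e', first_stop Y r e'.
Proof.
  intros He Hstop HK. apply NNPP. intro Hnone.
  assert (Hall : forall n : nat, class_active_below Y r (K + Z.of_nat n)).
  { induction n as [|n IH]; intros k Hk Hlt.
    - apply HK; [exact Hk|lia].
    - destruct (Z_lt_ge_dec k (K + Z.of_nat n)); [now apply IH|].
      destruct (active Y k) eqn:Ek; [reflexivity|].
      exfalso. apply Hnone. exists k. split; [exact Hk|]. split; [exact Ek|].
      intros k' Hk' Hlt'. apply IH; [exact Hk'|lia]. }
  rewrite (Hall (Z.to_nat (e - K + 1)) e He) in Hstop by lia. discriminate.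
Qed.

Lemma class_active_cong B r k : class_active B r -> cong3 r k -> active B k = true.
Proof.
  unfold cong3. intros Hall Hk.
  replace k with (r + 3 * ((k - r) / 3)) by zlia. apply Hall.
Qed.

Lemma active_neighbours y k :
  active y k = true -> active y (k - 1) = false /\ active y (k + 1) = false.
Proof.
  unfold active.
  repeat match goal with |- context [y ?e] => progress (ring_simplify e) end.
  destruct (y (k - 2)), (y (k - 1)), (y k), (y (k + 1)), (y (k + 2)), (y (k + 3));
    simpl; intuition congruence.
Qed.

Lemma class_active_off B r k : class_active B r -> ~ cong3 r k -> active B k = false.
Proof.
  unfold cong3. intros Hall Hk.
  assert (Hm : (k - r) mod 3 = 1 \/ (k - r) mod 3 = 2) by zlia.
  destruct Hm as [Hm|Hm].
  - replace k with ((k - 1) + 1) by lia. apply active_neighbours.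
    apply (class_active_cong B r); [exact Hall|]. unfold cong3. zlia.
  - replace k with ((k + 1) - 1) by lia. apply active_neighbours.
    apply (class_active_cong B r); [exact Hall|]. unfold cong3. zlia.
Qed.

Lemma slides_class B r s i :
  class_active B r -> cong3 r i -> slides s B i = B (i + 3 * Z.of_nat s).
Proof.
  intros Hall Hi. rewrite <- (Nat.add_0_l s) at 1. rewrite slides_run; [reflexivity|].
  intros j _. apply (class_active_cong B r); [exact Hall|]. now apply cong3_add.
Qed.

Lemma slides_off_class B r s i : class_active B r -> ~ cong3 r i -> slides s B i = B i.
Proof. intros Hall Hi. apply slides_inactive. now apply (class_active_off B r). Qed.

Lemma run_of_class_active_below Y r i n :
  cong3 r i -> class_active_below Y r (i + 3 * Z.of_nat n) -> active_run Y i n.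
Proof. intros Hi Hbelow j Hj. apply Hbelow; [now apply cong3_add|lia]. Qed.

Definition first_stop_matches (B Y : config) (r : Z) : Prop :=
  forall e, first_stop Y r e -> forall k, cong3 r k -> B k = Y e.

Definition run_prefix_agrees (B Y : config) (r : Z) : Prop :=
  forall j, cong3 r j -> class_active_below Y r (j + 1) -> Y j = B j.

Definition stops_carry (B Y : config) : Prop :=
  forall i e, stops_at Y i e -> Y e = B i.

Definition SInv_condition (B Y : config) : Prop :=
  forall r, 0 <= r < 3 -> class_active B r ->
    first_stop_matches B Y r /\ (run_prefix_agrees B Y r \/ stops_carry B Y).

Section Perturbation.

Variables (B Y : config) (m L R : Z).
Hypothesis m_pos : 0 < m.
Hypothesis B_periodic : forall k t, B (k + m * t) = B k.
Hypothesis Y_out : forall j, j < L \/ R < j -> Y j = B j.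
Hypothesis L_le_R : L <= R.

Lemma active_B_periodic k t : active B (k + m * t) = active B k.
Proof.
  unfold active.
  replace (k + m * t - 1) with (k - 1 + m * t) by lia.
  replace (k + m * t + 1) with (k + 1 + m * t) by lia.
  replace (k + m * t + 2) with (k + 2 + m * t) by lia.
  now rewrite !B_periodic.
Qed.

Lemma active_Y_out k : k + 2 < L \/ R < k - 1 -> active Y k = active B k.
Proof. intro Hk. unfold active. now rewrite !Y_out by lia. Qed.

Lemma diff_in_window k : B k <> Y k -> L <= k <= R.
Proof.
  intro Hk. destruct (Z_lt_ge_dec k L), (Z_le_gt_dec k R); try lia;
    exfalso; apply Hk; symmetry; apply Y_out; lia.
Qed.

Lemma active_diff_in_window k : active B k <> active Y k -> L - 2 <= k <= R + 1.
Proof.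
  intro Hk. destruct (Z_lt_ge_dec k (L - 2)), (Z_le_gt_dec k (R + 1)); try lia;
    exfalso; apply Hk; symmetry; apply active_Y_out; lia.
Qed.

Lemma diff_le_right s i : slides s B i <> slides s Y i -> i <= R + 1.
Proof.
  intro Hi. destruct (Z_le_gt_dec i (R + 1)) as [|Hgt]; [assumption|].
  exfalso. apply Hi. symmetry. apply slides_agree. intros j _ _. split.
  - apply active_Y_out. lia.
  - apply Y_out. lia.
Qed.

Lemma class_active_far_left r : class_active B r -> class_active_below Y r (L - 2).
Proof.
  intros Hall k Hk Hlt. rewrite active_Y_out by lia. now apply (class_active_cong B r).
Qed.

Lemma run_class_active_below r i j :
  class_active B r -> cong3 r i -> i < L - 3 -> active_run Y i j ->
  class_active_below Y r (i + 3 * Z.of_nat j).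
Proof.
  intros Hall Hi HiL Hrun k Hk Hlt.
  destruct (Z_lt_ge_dec k i).
  - apply (class_active_far_left r Hall); [exact Hk|lia].
  - destruct (cong3_le r i k Hi Hk ltac:(lia)) as [j' ->]. apply Hrun. lia.
Qed.

Lemma run_first_stop r i j :
  class_active B r -> cong3 r i -> i < L - 3 -> active_run Y i j ->
  active Y (i + 3 * Z.of_nat j) = false -> first_stop Y r (i + 3 * Z.of_nat j).
Proof.
  intros Hall Hi HiL Hrun Hstop. split; [now apply cong3_add|]. split; [exact Hstop|].
  now apply (run_class_active_below r i j).
Qed.

Lemma B_class_constant r e k k' :
  class_active B r -> first_stop_matches B Y r -> cong3 r e -> active Y e = false ->
  cong3 r k -> cong3 r k' -> B k = B k'.
Proof.
  intros Hall Hmatch He Hstop Hk Hk'.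
  destruct (first_stop_exists Y r (L - 2) e He Hstop (class_active_far_left r Hall))
    as [e' He'].
  now rewrite (Hmatch e' He' k Hk), (Hmatch e' He' k' Hk').
Qed.

Lemma slides_B_at_stop r s i e :
  class_active B r -> first_stop_matches B Y r -> stops_at Y i e -> slides s B i = B i.
Proof.
  intros Hall Hmatch Hie.
  destruct (classic (cong3 r i)) as [Hi|Hi]; [|now apply (slides_off_class B r)].
  rewrite (slides_class B r) by assumption.
  apply stops_at_iff in Hie as [j [-> [_ Hstop]]].
  apply (B_class_constant r (i + 3 * Z.of_nat j)); try apply cong3_add; assumption.
Qed.


Lemma bounded_of_prefix_agrees r :
  class_active B r -> first_stop_matches B Y r -> run_prefix_agrees B Y r ->
  bounded_diff (fun s => slides s B) (fun s => slides s Y).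
Proof.
  intros Hall Hmatch Hprefix. exists (Z.to_nat (R - L + 5)). intro s. exists (L - 3).
  intros i Hi. pose proof (diff_le_right s i Hi).
  destruct (Z_lt_ge_dec i (L - 3)) as [HiL|]; [|lia]. exfalso. apply Hi.
  destruct (classic (cong3 r i)) as [Hc|Hc].
  - rewrite (slides_class B r s i Hall Hc).
    destruct (slides_cases s Y i) as [[Hrun HY]|[j [_ [Hrun [Hstop HY]]]]]; rewrite HY.
    + destruct (active Y (i + 3 * Z.of_nat s)) eqn:Ea.
      * symmetry. apply Hprefix; [now apply cong3_add|].
        intros k Hk Hlt. destruct (Z.eq_dec k (i + 3 * Z.of_nat s)) as [->|]; [exact Ea|].
        apply (run_class_active_below r i s); auto. lia.
      * apply (Hmatch _ (run_first_stop r i s Hall Hc HiL Hrun Ea)). now apply cong3_add.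
    + apply (Hmatch _ (run_first_stop r i j Hall Hc HiL Hrun Hstop)). now apply cong3_add.
  - rewrite (slides_off_class B r s i Hall Hc), slides_inactive.
    + symmetry. apply Y_out. lia.
    + rewrite active_Y_out by lia. now apply (class_active_off B r).
Qed.


Lemma bounded_of_stops_carry r :
  class_active B r -> first_stop_matches B Y r -> stops_carry B Y ->
  bounded_diff (fun s => slides s B) (fun s => slides s Y).
Proof.
  intros Hall Hmatch Hcarry. exists (Z.to_nat (R - L + 7)). intro s.
  exists (L - 3 * Z.of_nat s - 2). intros i Hi.
  destruct (slides_cases s Y i) as [[Hrun HY]|[j [_ [Hrun [Hstop HY]]]]].
  - rewrite HY in Hi. destruct (classic (cong3 r i)) as [Hc|Hc].
    + rewrite (slides_class B r s i Hall Hc) in Hi. apply diff_in_window in Hi. lia.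
    + rewrite (slides_off_class B r s i Hall Hc) in Hi. destruct s as [|s'].
      * rewrite Z.add_0_r in Hi. apply diff_in_window in Hi. lia.
      * assert (Hoff : forall j, (j <= s')%nat -> L - 2 <= i + 3 * Z.of_nat j <= R + 1).
        { intros j Hj. apply active_diff_in_window.
          assert (Hcj : ~ cong3 r (i + 3 * Z.of_nat j)).
          { intro C. apply Hc. replace i with (i + 3 * Z.of_nat j - 3 * Z.of_nat j) by lia.
            now apply cong3_sub. }
          rewrite (class_active_off B r _ Hall Hcj), (Hrun j) by lia. discriminate. }
        pose proof (Hoff 0%nat ltac:(lia)). pose proof (Hoff s' ltac:(lia)). lia.
  - exfalso. apply Hi.
    assert (Hie : stops_at Y i (i + 3 * Z.of_nat j)) by (apply stops_at_iff; eauto).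
    rewrite HY, (Hcarry _ _ Hie). now apply (slides_B_at_stop r s i _ Hall Hmatch Hie).
Qed.


Lemma inactive_within_period :
  (forall r, 0 <= r < 3 -> ~ class_active B r) ->
  forall k, exists j, (j < Z.to_nat m)%nat /\ active B (k + 3 * Z.of_nat j) = false.
Proof.
  intros Hnone k. apply NNPP. intro Hall. apply (Hnone (k mod 3)); [zlia|]. intro t.
  set (T := (k mod 3 + 3 * t - k) / 3).
  assert (HT : 0 <= T mod m < m) by (apply Z.mod_pos_bound; lia).
  replace (k mod 3 + 3 * t) with (k + 3 * (T mod m) + m * (3 * (T / m))) by (unfold T; zlia).
  rewrite active_B_periodic.
  destruct (active B (k + 3 * (T mod m))) eqn:E; [reflexivity|].
  exfalso. apply Hall. exists (Z.to_nat (T mod m)). rewrite Z2Nat.id by lia. split; [lia|exact E].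
Qed.

Lemma bounded_of_no_class_active :
  (forall r, 0 <= r < 3 -> ~ class_active B r) ->
  bounded_diff (fun s => slides s B) (fun s => slides s Y).
Proof.
  intro Hnone. exists (Z.to_nat (R - L + 3 * m + 5)). intro s. exists (L - 3 * m - 3).
  intros i Hi. pose proof (diff_le_right s i Hi).
  destruct (Z_lt_ge_dec i (L - 3 * m - 3)); [|lia]. exfalso. apply Hi. symmetry.
  destruct (inactive_within_period Hnone i) as [j0 [Hj0 Hstop]].
  apply slides_agree. intros j Hj Hrun. destruct (le_lt_dec j j0).
  - split; [apply active_Y_out|apply Y_out]; lia.
  - specialize (Hrun j0 ltac:(lia)). rewrite active_Y_out in Hrun by lia. congruence.
Qed.

Lemma bounded_of_SInv_condition :
  SInv_condition B Y -> bounded_diff (fun s => slides s B) (fun s => slides s Y).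
Proof.
  intro Hcond. destruct (classic (exists r, 0 <= r < 3 /\ class_active B r))
    as [[r [Hr Hall]]|Hnone].
  - destruct (Hcond r Hr Hall) as [Hmatch [Hprefix|Hcarry]].
    + now apply (bounded_of_prefix_agrees r).
    + now apply (bounded_of_stops_carry r).
  - apply bounded_of_no_class_active. intros r Hr Hall. apply Hnone. eauto.
Qed.


Lemma first_stop_matches_of_bounded r :
  bounded_diff (fun s => slides s B) (fun s => slides s Y) -> class_active B r ->
  first_stop_matches B Y r.
Proof.
  intros [w Hw] Hall e [He [Hstop Hbelow]] k Hk. apply NNPP. intro Hne.
  set (T := (k - e) / 3).
  assert (HT : 0 <= T mod m < m) by (apply Z.mod_pos_bound; lia).
  set (d := Z.to_nat (T mod m)).
  assert (HBk : B (e + 3 * Z.of_nat d) = B k).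
  { rewrite <- (B_periodic _ (3 * (T / m))). f_equal. unfold d, T, cong3 in *.
    rewrite Z2Nat.id by lia. zlia. }
  set (n := (Z.to_nat m * w)%nat).
  assert (Hn : Z.of_nat n = m * Z.of_nat w) by (unfold n; rewrite Nat2Z.inj_mul, Z2Nat.id; lia).
  destruct (Hw (d + n)%nat) as [a Ha].
  assert (De : slides (d + n) B e <> slides (d + n) Y e).
  { rewrite (slides_class B r _ e Hall He), slides_inactive by exact Hstop.
    replace (e + 3 * Z.of_nat (d + n)) with (e + 3 * Z.of_nat d + m * (3 * Z.of_nat w)) by lia.
    now rewrite B_periodic, HBk. }
  set (p := e - 3 * Z.of_nat n).
  assert (Hp : cong3 r p) by now apply cong3_sub.
  assert (Dp : slides (d + n) B p <> slides (d + n) Y p).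
  { rewrite (slides_class B r _ p Hall Hp), slides_run.
    - replace (p + 3 * Z.of_nat n) with e by (unfold p; lia).
      replace (p + 3 * Z.of_nat (d + n)) with (e + 3 * Z.of_nat d) by (unfold p; lia).
      now rewrite slides_inactive, HBk.
    - apply (run_of_class_active_below Y r p n Hp).
      replace (p + 3 * Z.of_nat n) with e by (unfold p; lia). exact Hbelow. }
  apply Ha in De. apply Ha in Dp. unfold p in Dp. nia.
Qed.

Lemma prefix_agrees_or_stops_carry r :
  bounded_diff (fun s => slides s B) (fun s => slides s Y) -> class_active B r ->
  first_stop_matches B Y r -> run_prefix_agrees B Y r \/ stops_carry B Y.
Proof.
  intros [w Hw] Hall Hmatch. apply NNPP. intros [Hprefix Hcarry]%not_or_and.
  apply not_all_ex_not in Hprefix as [j0 Hj0].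
  apply imply_to_and in Hj0 as [Hc0 Hj0]. apply imply_to_and in Hj0 as [Hbelow0 Hne0].
  apply not_all_ex_not in Hcarry as [i0 Hcarry]. apply not_all_ex_not in Hcarry as [e0 Hcarry].
  apply imply_to_and in Hcarry as [Hstops Hne1].
  pose proof Hstops as [J [HJ [HrunJ HstopJ]]]%stops_at_iff.
  set (s := (J + Z.to_nat (Z.abs (i0 - j0)) + w)%nat).
  destruct (Hw s) as [a Ha].
  assert (Di : slides s B i0 <> slides s Y i0).
  { rewrite (slides_B_at_stop r s i0 e0 Hall Hmatch Hstops).
    replace s with (Z.to_nat (Z.abs (i0 - j0)) + w + J)%nat by (unfold s; lia).
    rewrite slides_run, <- HJ, slides_inactive by assumption. congruence. }
  set (p := j0 - 3 * Z.of_nat s).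
  assert (Hp : cong3 r p) by now apply cong3_sub.
  assert (Dp : slides s B p <> slides s Y p).
  { rewrite (slides_class B r s p Hall Hp).
    change (slides s Y p) with (slides (0 + s) Y p). rewrite slides_run.
    - replace (p + 3 * Z.of_nat s) with j0 by (unfold p; lia).
      intro C. apply Hne0. now symmetry.
    - apply (run_of_class_active_below Y r p s Hp). intros k Hk Hlt. apply Hbelow0; [exact Hk|].
      unfold p in Hlt. lia. }
  apply Ha in Di. apply Ha in Dp. unfold p, s in Dp.
  rewrite !Nat2Z.inj_add, Z2Nat.id in Dp by lia. lia.
Qed.

Lemma SInv_condition_iff_bounded :
  SInv_condition B Y <-> bounded_diff (fun s => slides s B) (fun s => slides s Y).
Proof.
  split; [apply bounded_of_SInv_condition|].
  intros Hbd r _ Hall. pose proof (first_stop_matches_of_bounded r Hbd Hall) as Hmatch.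
  split; [exact Hmatch|]. now apply prefix_agrees_or_stops_carry.
Qed.

End Perturbation.

Definition first_stop_matches_below (Q : Z) (B Y : config) (r : Z) : Prop :=
  forall e, e < Q -> first_stop Y r e -> forall k, cong3 r k -> B k = Y e.

Definition run_prefix_agrees_below (Q : Z) (B Y : config) (r : Z) : Prop :=
  forall j, j < Q -> cong3 r j -> class_active_below Y r (j + 1) -> Y j = B j.

Definition stops_carry_below (Q : Z) (B Y : config) : Prop :=
  forall i e, e < Q -> stops_at Y i e -> Y e = B i.

Definition runs_to (Y : config) (i c : Z) : Prop :=
  exists j : nat, c = i + 3 * Z.of_nat j /\ active_run Y i j.

Definition enters_at (Q : Z) (B Y : config) (c : Z) (b : bool) : Prop :=
  exists i, i < Q /\ runs_to Y i c /\ B i = b.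

(* A run crossing the cut [Q] first lands in [[Q, Q + 2]], its steps having length 3. *)
Definition same_left_profile (Q : Z) (B Y1 Y2 : config) : Prop :=
  (forall r, 0 <= r < 3 ->
     (class_active_below Y1 r Q <-> class_active_below Y2 r Q) /\
     (first_stop_matches_below Q B Y1 r <-> first_stop_matches_below Q B Y2 r) /\
     (run_prefix_agrees_below Q B Y1 r <-> run_prefix_agrees_below Q B Y2 r)) /\
  (stops_carry_below Q B Y1 <-> stops_carry_below Q B Y2) /\
  (forall c b, Q <= c <= Q + 2 -> (enters_at Q B Y1 c b <-> enters_at Q B Y2 c b)).

Lemma stops_at_le y i e : stops_at y i e -> i <= e.
Proof. induction 1; lia. Qed.

Lemma stops_at_split y Q i e :
  stops_at y i e -> i < Q -> Q <= e -> exists c, Q <= c <= Q + 2 /\ runs_to y i c /\ stops_at y c e.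
Proof.
  induction 1 as [i Hi|i e Hi Hc IH]; intros HiQ HQe; [lia|].
  destruct (Z_lt_ge_dec (i + 3) Q) as [Hl|Hg].
  - destruct (IH Hl HQe) as [c [Hc1 [[j [Ej Hj]] Hc3]]].
    exists c. split; [lia|]. split; [|exact Hc3].
    exists (S j). split; [lia|]. now apply active_run_succ.
  - exists (i + 3). split; [lia|]. split; [|exact Hc].
    exists 1%nat. split; [lia|]. apply active_run_succ. split; [exact Hi|apply active_run_0].
Qed.

Lemma runs_to_stops_at y i c e : runs_to y i c -> stops_at y c e -> stops_at y i e.
Proof.
  intros [j [-> Hrun]] [j' [-> [Hrun' Hstop]]]%stops_at_iff. apply stops_at_iff.
  exists (j + j')%nat. split; [lia|]. split; [|exact Hstop].
  intros k Hk. destruct (Nat.lt_ge_cases k j); [now apply Hrun|].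
  replace (i + 3 * Z.of_nat k) with (i + 3 * Z.of_nat j + 3 * Z.of_nat (k - j)) by lia.
  apply Hrun'. lia.
Qed.

Lemma stops_at_active_agree y1 y2 i e :
  (forall k, i <= k <= e -> active y1 k = active y2 k) -> stops_at y1 i e -> stops_at y2 i e.
Proof.
  intros Hagree Hie. induction Hie as [i Hi|i e Hi Hc IH].
  - constructor. rewrite <- Hagree by lia. exact Hi.
  - pose proof (stops_at_le _ _ _ Hc). apply stop_later.
    + rewrite <- Hagree by lia. exact Hi.
    + apply IH. intros k Hk. apply Hagree. lia.
Qed.

Section Transfer.

Variables (Q : Z) (B Y1 Y2 : config).
Hypothesis agree_right : forall j, Q - 1 <= j -> Y1 j = Y2 j.
Hypothesis profile : same_left_profile Q B Y1 Y2.

Lemma active_agree_right k : Q <= k -> active Y1 k = active Y2 k.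
Proof. intro Hk. unfold active. now rewrite !agree_right by lia. Qed.

Lemma class_active_below_transfer r j :
  0 <= r < 3 -> Q <= j -> class_active_below Y2 r j -> class_active_below Y1 r j.
Proof.
  intros Hr Hj Hbelow k Hk Hlt. destruct (Z_lt_ge_dec k Q).
  - apply (proj1 (proj1 profile r Hr)); [|exact Hk|lia].
    intros k' Hk' Hlt'. apply Hbelow; [exact Hk'|lia].
  - rewrite active_agree_right by lia. now apply Hbelow.
Qed.

Lemma first_stop_matches_transfer r :
  0 <= r < 3 -> first_stop_matches B Y1 r -> first_stop_matches B Y2 r.
Proof.
  intros Hr Hmatch e [He [Hstop Hbelow]] k Hk.
  destruct (Z_lt_ge_dec e Q) as [HeQ|HeQ].
  - apply (proj1 (proj1 (proj2 (proj1 profile r Hr)))); try assumption.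
    + intros e' _ He'. now apply Hmatch.
    + repeat split; assumption.
  - rewrite <- agree_right by lia. apply Hmatch; [|exact Hk].
    split; [exact He|]. rewrite active_agree_right by lia.
    split; [exact Hstop|]. apply class_active_below_transfer; [exact Hr|lia|exact Hbelow].
Qed.

Lemma run_prefix_agrees_transfer r :
  0 <= r < 3 -> run_prefix_agrees B Y1 r -> run_prefix_agrees B Y2 r.
Proof.
  intros Hr Hprefix j Hj Hbelow. destruct (Z_lt_ge_dec j Q) as [HjQ|HjQ].
  - apply (proj1 (proj2 (proj2 (proj1 profile r Hr)))); try assumption.
    intros j' _ Hj'. now apply Hprefix.
  - rewrite <- agree_right by lia. apply Hprefix; [exact Hj|].
    apply class_active_below_transfer; [exact Hr|lia|exact Hbelow].
Qed.

Lemma stops_carry_transfer : stops_carry B Y1 -> stops_carry B Y2.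
Proof.
  intros Hcarry i e Hie. destruct (Z_lt_ge_dec e Q) as [HeQ|HeQ].
  - apply (proj1 (proj1 (proj2 profile))); try assumption.
    intros i' e' _ Hie'. now apply Hcarry.
  - assert (Hright : forall c, Q <= c -> stops_at Y2 c e -> stops_at Y1 c e).
    { intros c Hc. apply stops_at_active_agree. intros k Hk. symmetry.
      apply active_agree_right. lia. }
    rewrite <- agree_right by lia. destruct (Z_lt_ge_dec i Q) as [HiQ|HiQ].
    + destruct (stops_at_split Y2 Q i e Hie HiQ ltac:(lia)) as [c [Hc [Hic Hce]]].
      destruct (proj2 (proj2 (proj2 profile) c (B i) Hc)) as [i' [_ [Hi'c <-]]];
        [exists i; auto|].
      apply Hcarry. apply (runs_to_stops_at _ _ c); [exact Hi'c|]. apply Hright; [lia|exact Hce].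
    + apply Hcarry, Hright; [lia|exact Hie].
Qed.

Lemma SInv_condition_transfer : SInv_condition B Y1 -> SInv_condition B Y2.
Proof.
  intros Hcond r Hr Hall. destruct (Hcond r Hr Hall) as [Hmatch Hrest].
  split; [now apply first_stop_matches_transfer|].
  destruct Hrest as [Hprefix|Hcarry]; [left|right].
  - now apply run_prefix_agrees_transfer.
  - now apply stops_carry_transfer.
Qed.

End Transfer.

Section LeftAgreement.

Variables (Q : Z) (B Y1 Y2 : config).
Hypothesis agree_left : forall j, j <= Q + 2 -> Y1 j = Y2 j.

Lemma active_agree_left k : k <= Q -> active Y1 k = active Y2 k.
Proof. intro Hk. unfold active. now rewrite !agree_left by lia. Qed.

Lemma class_active_below_agree_left r j :
  j <= Q + 1 -> class_active_below Y1 r j -> class_active_below Y2 r j.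
Proof. intros Hj Hbelow k Hk Hlt. rewrite <- active_agree_left by lia. now apply Hbelow. Qed.

Lemma first_stop_matches_below_agree_left r :
  first_stop_matches_below Q B Y1 r -> first_stop_matches_below Q B Y2 r.
Proof.
  intros Hmatch e HeQ [He [Hstop Hbelow]] k Hk. rewrite <- agree_left by lia.
  apply Hmatch; [exact HeQ| |exact Hk].
  split; [exact He|]. rewrite active_agree_left by lia. split; [exact Hstop|].
  intros k' Hk' Hlt. rewrite active_agree_left by lia. now apply Hbelow.
Qed.

Lemma run_prefix_agrees_below_agree_left r :
  run_prefix_agrees_below Q B Y1 r -> run_prefix_agrees_below Q B Y2 r.
Proof.
  intros Hprefix j HjQ Hj Hbelow. rewrite <- agree_left by lia.
  apply Hprefix; [exact HjQ|exact Hj|].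
  intros k Hk Hlt. rewrite active_agree_left by lia. now apply Hbelow.
Qed.

Lemma stops_carry_below_agree_left : stops_carry_below Q B Y1 -> stops_carry_below Q B Y2.
Proof.
  intros Hcarry i e HeQ Hie. rewrite <- agree_left by lia. apply Hcarry; [exact HeQ|].
  apply (stops_at_active_agree Y2); [|exact Hie].
  intros k Hk. symmetry. apply active_agree_left. lia.
Qed.

Lemma enters_at_agree_left c b : c <= Q + 2 -> enters_at Q B Y1 c b -> enters_at Q B Y2 c b.
Proof.
  intros Hc [i [HiQ [[j [Ej Hrun]] Hb]]]. exists i. split; [exact HiQ|]. split; [|exact Hb].
  exists j. split; [exact Ej|]. intros j' Hj'. rewrite <- active_agree_left by lia. now apply Hrun.
Qed.

End LeftAgreement.

Lemma same_left_profile_of_agree Q B Y1 Y2 :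
  (forall j, j <= Q + 2 -> Y1 j = Y2 j) -> same_left_profile Q B Y1 Y2.
Proof.
  intro H12. assert (H21 : forall j, j <= Q + 2 -> Y2 j = Y1 j) by (intros; symmetry; auto).
  split; [|split].
  - intros r _. repeat split.
    + apply (class_active_below_agree_left Q Y1 Y2 H12); lia.
    + apply (class_active_below_agree_left Q Y2 Y1 H21); lia.
    + apply (first_stop_matches_below_agree_left Q B Y1 Y2 H12).
    + apply (first_stop_matches_below_agree_left Q B Y2 Y1 H21).
    + apply (run_prefix_agrees_below_agree_left Q B Y1 Y2 H12).
    + apply (run_prefix_agrees_below_agree_left Q B Y2 Y1 H21).
  - split; now apply stops_carry_below_agree_left.
  - intros c b Hc. split; apply enters_at_agree_left; (assumption || lia).
Qed.

Definition decide (P : Prop) : bool := if excluded_middle_informative P then true else false.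

Lemma decide_spec (P : Prop) : decide P = true <-> P.
Proof. unfold decide. destruct (excluded_middle_informative P); split; easy. Qed.

Lemma decide_inj (P P' : Prop) : decide P = decide P' -> (P <-> P').
Proof. intro E. rewrite <- (decide_spec P), <- (decide_spec P'), E. reflexivity. Qed.

Definition left_profile (Q : Z) (B Y : config) : list bool :=
  [decide (class_active_below Y 0 Q); decide (class_active_below Y 1 Q);
   decide (class_active_below Y 2 Q);
   decide (first_stop_matches_below Q B Y 0); decide (first_stop_matches_below Q B Y 1);
   decide (first_stop_matches_below Q B Y 2);
   decide (run_prefix_agrees_below Q B Y 0); decide (run_prefix_agrees_below Q B Y 1);
   decide (run_prefix_agrees_below Q B Y 2);
   decide (stops_carry_below Q B Y);
   decide (enters_at Q B Y Q false); decide (enters_at Q B Y Q true);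
   decide (enters_at Q B Y (Q + 1) false); decide (enters_at Q B Y (Q + 1) true);
   decide (enters_at Q B Y (Q + 2) false); decide (enters_at Q B Y (Q + 2) true)].

Lemma same_left_profile_of_eq Q B Y1 Y2 :
  left_profile Q B Y1 = left_profile Q B Y2 -> same_left_profile Q B Y1 Y2.
Proof.
  unfold left_profile. intro E. injection E; intros.
  repeat match goal with H : decide _ = decide _ |- _ => apply decide_inj in H end.
  split; [|split].
  - intros r Hr. assert (r = 0 \/ r = 1 \/ r = 2) as [Er|[Er|Er]] by lia; subst r; tauto.
  - tauto.
  - intros c b Hc. assert (c = Q \/ c = Q + 1 \/ c = Q + 2) as [Ec|[Ec|Ec]] by lia;
      subst c; destruct b; tauto.
Qed.

Section OneWayProtocol.

Context {X Y : Type}.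

Fixpoint one_way_protocol (k : nat) (msg : X -> list bool) (bob : list bool -> Y -> bool)
  : protocol X Y :=
  match k with
  | O => BobNode (bob []) (Leaf false) (Leaf true)
  | S k => AliceNode (fun x => hd false (msg x))
             (one_way_protocol k (fun x => tl (msg x)) (fun bs => bob (false :: bs)))
             (one_way_protocol k (fun x => tl (msg x)) (fun bs => bob (true :: bs)))
  end.

Lemma depth_one_way_protocol k msg bob : depth (one_way_protocol k msg bob) = S k.
Proof.
  revert msg bob; induction k as [|k IH]; intros msg bob; simpl; [reflexivity|].
  now rewrite !IH, Nat.max_id.
Qed.

Lemma eval_one_way_protocol k msg bob x y :
  length (msg x) = k -> eval (one_way_protocol k msg bob) x y = bob (msg x) y.
Proof.
  revert msg bob; induction k as [|k IH]; intros msg bob Hlen; simpl.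
  - destruct (msg x); [|discriminate]. now destruct (bob [] y).
  - destruct (msg x) as [|[|] l] eqn:E; [discriminate| |];
      simpl; rewrite IH; rewrite E; simpl in *; congruence.
Qed.

End OneWayProtocol.

Lemma comm_complexity_le_of_message (g : list bool -> Prop) (n k : nat)
  (msg : nat -> list bool -> list bool) :
  (forall i x, length (msg i x) = k) ->
  (forall i x x' y, (i < n)%nat -> length x = i -> length x' = i -> length y = (n - i)%nat ->
     msg i x = msg i x' -> g (x' ++ y) -> g (x ++ y)) ->
  comm_complexity_le g n (S k).
Proof.
  intros Hlen Htransfer i Hi.
  set (bob := fun bs y => decide (exists x', length x' = i /\ msg i x' = bs /\ g (x' ++ y))).
  exists (one_way_protocol k (msg i) bob).
  split; [now rewrite depth_one_way_protocol|].
  intros x y Hx Hy. rewrite eval_one_way_protocol by apply Hlen. unfold bob.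
  rewrite decide_spec. split.
  - intros [x' [Hx' [Hm Hg]]]. now apply (Htransfer i x x' y).
  - intro Hg. now exists x.
Qed.

Lemma decide_ext (P P' : Prop) : (P <-> P') -> decide P = decide P'.
Proof.
  intro E. destruct (decide P) eqn:HP.
  - symmetry. apply decide_spec, E, decide_spec, HP.
  - destruct (decide P') eqn:HP'; [|reflexivity].
    rewrite <- HP. apply decide_spec, E, decide_spec, HP'.
Qed.

Lemma left_profile_agree Q B Y1 Y2 :
  (forall j, j <= Q + 2 -> Y1 j = Y2 j) -> left_profile Q B Y1 = left_profile Q B Y2.
Proof.
  intro H12. destruct (same_left_profile_of_agree Q B Y1 Y2 H12) as [H1 [H2 H3]].
  destruct (H1 0 ltac:(lia)) as (?&?&?), (H1 1 ltac:(lia)) as (?&?&?),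
    (H1 2 ltac:(lia)) as (?&?&?).
  pose proof (H3 Q false ltac:(lia)). pose proof (H3 Q true ltac:(lia)).
  pose proof (H3 (Q + 1) false ltac:(lia)). pose proof (H3 (Q + 1) true ltac:(lia)).
  pose proof (H3 (Q + 2) false ltac:(lia)). pose proof (H3 (Q + 2) true ltac:(lia)).
  unfold left_profile.
  repeat (apply (f_equal2 (@cons bool)); [apply decide_ext; assumption|]). reflexivity.
Qed.

Lemma app_eq_app_same_length {A : Type} (a1 a2 b1 b2 : list A) :
  length a1 = length a2 -> a1 ++ b1 = a2 ++ b2 -> a1 = a2 /\ b1 = b2.
Proof.
  revert a2; induction a1 as [|a a1 IH]; intros [|a' a2] Hlen E; try discriminate; [easy|].
  injection E as -> E. injection Hlen as Hlen. destruct (IH a2 Hlen E) as [-> ->]. easy.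
Qed.

Lemma periodic_add u k t :
  u <> [] -> periodic u (k + Z.of_nat (length u) * t) = periodic u k.
Proof.
  intro Hu. unfold periodic.
  assert (Hl : Z.of_nat (length u) <> 0) by (destruct u; [congruence|simpl; lia]).
  rewrite (Z.mul_comm _ t), Z.mod_add by exact Hl. reflexivity.
Qed.

Lemma patch_outside u z k : k < 0 \/ Z.of_nat (length z) <= k -> patch u z k = periodic u k.
Proof.
  intro Hk. unfold patch.
  destruct (0 <=? k) eqn:E1, (k <? Z.of_nat (length z)) eqn:E2; simpl; try reflexivity.
  apply Z.leb_le in E1. apply Z.ltb_lt in E2. lia.
Qed.

Lemma patch_agree u z1 z2 (P : Z -> Prop) j :
  length z1 = length z2 ->
  (forall k : nat, P (Z.of_nat k) -> (k < length z1)%nat -> nth k z1 false = nth k z2 false) ->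
  P j -> patch u z1 j = patch u z2 j.
Proof.
  intros Hlen Hnth Hj. unfold patch. rewrite Hlen.
  destruct ((0 <=? j) && (j <? Z.of_nat (length z2))) eqn:E; [|reflexivity].
  apply andb_true_iff in E as [E1 E2]. apply Z.leb_le in E1. apply Z.ltb_lt in E2.
  apply Hnth; [now rewrite Z2Nat.id|lia].
Qed.

Lemma SInv27_iff_condition u z :
  u <> [] -> SInv 27 u z <-> SInv_condition (rule27 (periodic u)) (rule27 (patch u z)).
Proof.
  intro Hu. rewrite SInv27_iff. symmetry.
  apply SInv_condition_iff_bounded with (m := Z.of_nat (length u)) (L := -1)
    (R := Z.of_nat (length z)).
  - destruct u; [congruence|simpl; lia].
  - intros k t. unfold eca.
    replace (k + Z.of_nat (length u) * t - 1) with (k - 1 + Z.of_nat (length u) * t) by lia.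
    replace (k + Z.of_nat (length u) * t + 1) with (k + 1 + Z.of_nat (length u) * t) by lia.
    now rewrite !periodic_add.
  - intros j Hj. apply eca_agree; apply patch_outside; lia.
  - lia.
Qed.

Definition last_letters (i : nat) (x : list bool) : list bool :=
  map (fun t => nth t x false) (seq (i - 6) 6).

Lemma last_letters_eq i x x' :
  last_letters i x = last_letters i x' ->
  forall k, (i - 6 <= k < i)%nat -> nth k x false = nth k x' false.
Proof.
  intros E k Hk. apply (f_equal (fun l => nth (k - (i - 6)) l false)) in E.
  unfold last_letters in E.
  assert (Hn : (k - (i - 6) < length (seq (i - 6) 6))%nat) by (rewrite length_seq; lia).
  rewrite <- !(nth_nth_nth_map _ _ _ (dn := 0%nat) (or_introl Hn)), seq_nth in E by lia.
  now replace (i - 6 + (k - (i - 6)))%nat with k in E by lia.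
Qed.

(* The profile is taken at [Q = i - 4]: the rule 27 image up to [Q + 2] only involves
   Alice's letters, and from [Q - 1] on only Bob's letters and Alice's last six.  Inside
   the profile Bob's letters are replaced by zeros. *)
Definition alice_message (u : list bool) (n i : nat) (x : list bool) : list bool :=
  last_letters i x ++
  left_profile (Z.of_nat i - 4) (rule27 (periodic u))
    (rule27 (patch u (x ++ repeat false (n - i)))).

Lemma length_alice_message u n i x : length (alice_message u n i x) = 22%nat.
Proof. unfold alice_message, last_letters. now rewrite length_app, length_map, length_seq. Qed.

Lemma rule27_patch_agree_left u x y y' j :
  length y = length y' -> j <= Z.of_nat (length x) - 2 ->
  rule27 (patch u (x ++ y)) j = rule27 (patch u (x ++ y')) j.
Proof.
  intros Hy Hj. apply eca_agree;
    apply (patch_agree u _ _ (fun k => k <= Z.of_nat (length x) - 1));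
    rewrite ?length_app; try lia;
    intros k Hk _; rewrite !app_nth1 by lia; reflexivity.
Qed.

Lemma rule27_patch_agree_right u x x' y j :
  length x = length x' ->
  (forall k, (length x - 6 <= k < length x)%nat -> nth k x false = nth k x' false) ->
  Z.of_nat (length x) - 5 <= j ->
  rule27 (patch u (x' ++ y)) j = rule27 (patch u (x ++ y)) j.
Proof.
  intros Hlen Htail Hj. apply eca_agree;
    apply (patch_agree u _ _ (fun k => Z.of_nat (length x) - 6 <= k));
    rewrite ?length_app; try lia;
    intros k Hk Hlt; destruct (Nat.lt_ge_cases k (length x)).
  all: try (rewrite !app_nth1 by lia; symmetry; apply Htail; lia).
  all: rewrite !app_nth2 by lia; now rewrite Hlen.
Qed.

Lemma SInv27_of_same_message u n i x x' y :
  u <> [] -> length x = i -> length x' = i -> length y = (n - i)%nat ->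
  alice_message u n i x = alice_message u n i x' -> SInv 27 u (x' ++ y) -> SInv 27 u (x ++ y).
Proof.
  intros Hu Hx Hx' Hy Hmsg. set (y0 := repeat false (n - i)).
  apply app_eq_app_same_length in Hmsg as [Htail Hprofile];
    [|unfold last_letters; now rewrite !length_map].
  rewrite !SInv27_iff_condition by exact Hu.
  apply SInv_condition_transfer with (Q := Z.of_nat i - 4).
  - intros j Hj. apply rule27_patch_agree_right; rewrite ?Hx.
    + congruence.
    + now apply last_letters_eq.
    + lia.
  - apply same_left_profile_of_eq.
    rewrite (left_profile_agree _ _ _ (rule27 (patch u (x' ++ y0)))),
            (left_profile_agree _ _ (rule27 (patch u (x ++ y))) (rule27 (patch u (x ++ y0))));
      [now symmetry| |];
      intros j Hj; apply rule27_patch_agree_left; unfold y0; rewrite ?repeat_length; lia.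
Qed.

Theorem mainTheorem12 :
  forall u : list bool, u <> [] ->
    exists C : nat, forall n : nat, comm_complexity_le (SInv 27 u) n C.
Proof.
  intros u Hu. exists 23%nat. intro n.
  apply (comm_complexity_le_of_message _ n 22 (alice_message u n)).
  - apply length_alice_message.
  - intros i x x' y _ Hx Hx' Hy Hmsg. now apply (SInv27_of_same_message u n i x x' y).
Qed.
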